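(* A commutative ring $A$ with identity is weak completely normal if and only if for any two non-comparable prime ideals $P, P'$ of $A$, $\operatorname{cl}_{\operatorname{spec} A}\{P\}\cap\operatorname{cl}_{\operatorname{spec} A}\{P'\}=\emptyset$.
   Context: All rings are commutative with identity; subrings contain the identity. $\operatorname{spec} A$ is the set of prime ideals of $A$ with the Zariski topology (so $\operatorname{cl}\{P\}$ is the set of primes containing $P$). A subring $A$ of a ring $B$ is a weak completely normal subring of $B$ if for any two distinct maximal ideals $M\neq M'$ of $B$ such that $M\cap A$ and $M'\cap A$ are non-comparable, $\operatorname{cl}_{\operatorname{spec} A}\{M\cap A\}\cap \operatorname{cl}_{\operatorname{spec} A}\{M'\cap A\}=\emptyset$. A ring $A$ is weak completely normal if it is a weak completely normal subring of every ring containing it as a subring. *)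

From HB Require Import structures.
From mathcomp Require Import all_boot all_order all_algebra.
Set Implicit Arguments. Unset Strict Implicit. Unset Printing Implicit Defensive.
Import GRing.Theory.
Local Open Scope ring_scope.

Definition is_ideal (R : comNzRingType) (I : R -> Prop) : Prop :=
  I 0 /\ (forall x y, I x -> I y -> I (x + y)) /\ (forall a x, I x -> I (a * x)).

Definition is_prime_ideal (R : comNzRingType) (P : R -> Prop) : Prop :=
  is_ideal P /\ ~ P 1 /\ (forall x y, P (x * y) -> P x \/ P y).

Definition is_maximal_ideal (R : comNzRingType) (M : R -> Prop) : Prop :=
  is_ideal M /\ ~ M 1 /\
  (forall J : R -> Prop, is_ideal J -> (forall x, M x -> J x) ->
     (forall x, J x <-> M x) \/ J 1).

Definition ideal_sub (R : comNzRingType) (I J : R -> Prop) : Prop :=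
  forall x, I x -> J x.

(* cl_{spec A}{P} : the primes of A containing P *)
Definition spec_closure (R : comNzRingType) (P : R -> Prop) (Q : R -> Prop) : Prop :=
  is_prime_ideal Q /\ ideal_sub P Q.

Definition closures_disjoint (R : comNzRingType) (P P' : R -> Prop) : Prop :=
  forall Q : R -> Prop, ~ (spec_closure P Q /\ spec_closure P' Q).

Definition non_comparable (R : comNzRingType) (P P' : R -> Prop) : Prop :=
  ~ ideal_sub P P' /\ ~ ideal_sub P' P.

Definition contract (A B : comNzRingType) (f : A -> B) (M : B -> Prop) : A -> Prop :=
  fun a => M (f a).

Definition weak_cn_subring (A B : comNzRingType) (f : {rmorphism A -> B}) : Prop :=
  forall M M' : B -> Prop,
    is_maximal_ideal M -> is_maximal_ideal M' ->
    ~ (forall x, M x <-> M' x) ->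
    non_comparable (contract f M) (contract f M') ->
    closures_disjoint (contract f M) (contract f M').

Definition weak_completely_normal (A : comNzRingType) : Prop :=
  forall (B : comNzRingType) (f : {rmorphism A -> B}), injective f ->
    weak_cn_subring f.

From HB Require Import structures.
From mathcomp Require Import all_boot all_order all_algebra.
From mathcomp Require Import boolp.
Set Implicit Arguments. Unset Strict Implicit. Unset Printing Implicit Defensive.
Import GRing.Theory.
Local Open Scope ring_scope.
Local Open Scope quotient_scope.

(* Contractions of maximal ideals are prime, which gives one direction.
   Conversely, given non-comparable primes P and P' of A, embed A diagonally into
   A * k(P) * k(P'), where k(P) is the fraction field of A/P (the factor A makes
   the embedding injective). The kernels of the projections onto k(P) and k(P')
   are distinct maximal ideals contracting to P and P', so the weak complete
   normality of A inside this ring yields that cl{P} and cl{P'} are disjoint. *)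

Section IdealTheory.
Variable R : comNzRingType.
Implicit Types (I M : R -> Prop) (x y : R).

Lemma idealN I x : is_ideal I -> I x -> I (- x).
Proof. by case=> _ [_ IM] /(IM (-1)); rewrite mulN1r. Qed.

Lemma maximal_ideal_prime M : is_maximal_ideal M -> is_prime_ideal M.
Proof.
case=> M_ideal [M1 M_max]; split=> //; split=> // x y Mxy.
have [Mx|NMx] := pselect (M x); [by left | right].
case: M_ideal => M0 [MD MM].
(* M + A x properly contains M, hence contains 1. *)
pose J z := exists a m, M m /\ z = a * x + m.
have J_ideal : is_ideal J.
  split; first by exists 0, 0; rewrite mul0r addr0.
  split=> [_ _ [a [m [Mm ->]]] [a' [m' [Mm' ->]]] | c _ [a [m [Mm ->]]]].
    by exists (a + a'), (m + m'); split; [exact: MD | rewrite mulrDl addrACA].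
  by exists (c * a), (c * m); split; [exact: MM | rewrite mulrDr mulrA].
have MJ z : M z -> J z by exists 0, z; rewrite mul0r add0r.
have [J_eq|[a [m [Mm J1]]]] := M_max J J_ideal MJ.
  by case: NMx; apply/J_eq; exists 1, 0; rewrite mul1r addr0.
have -> : y = a * (x * y) + y * m.
  by rewrite -[y in LHS]mulr1 J1 mulrDr mulrCA (mulrC y x).
by apply: MD; apply: MM.
Qed.

Lemma kernel_surjective_maximal (F : fieldType) (f : {rmorphism R -> F}) :
  (forall u, exists r, f r = u) -> is_maximal_ideal (fun r => f r = 0).
Proof.
move=> f_surj; have ker_ideal : is_ideal (fun r => f r = 0).
  split; first exact: rmorph0.
  by split=> [x y fx fy | a x fx]; rewrite ?rmorphD ?rmorphM fx ?fy ?addr0 ?mulr0.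
split=> //; split=> [|J J_ideal kerJ]; first by move/eqP; rewrite rmorph1 oner_eq0.
have [J_ker|] := pselect (forall x, J x -> f x = 0).
  by left=> x; split; [exact: J_ker | exact: kerJ].
move=> /existsNP[b /not_implyP[Jb fb_neq0]].
have [c fc] := f_surj (f b)^-1.
have fcb : f (c * b - 1) = 0.
  by rewrite rmorphB rmorphM rmorph1 fc mulVf ?subrr //; exact/eqP.
right; case: (J_ideal) => _ [JD JM].
have -> : 1 = - (c * b - 1) + c * b by rewrite opprB subrK.
exact: JD (idealN J_ideal (kerJ _ fcb)) (JM c _ Jb).
Qed.

Lemma contract_prime (S : comNzRingType) (f : {rmorphism S -> R}) M :
  is_prime_ideal M -> is_prime_ideal (contract f M).
Proof.
case=> [[M0 [MD MM]] [M1 M_prime]]; rewrite /contract.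
split; [split; [|split] | split].
- by rewrite rmorph0.
- by move=> x y Mx My; rewrite rmorphD; apply: MD.
- by move=> a x Mx; rewrite rmorphM; apply: MM.
- by rewrite rmorph1.
- by move=> x y; rewrite rmorphM; apply: M_prime.
Qed.

End IdealTheory.

(* Ideal quotients in MathComp are only commutative rings, whereas [{fraction _}]
   needs an [idomainType]; inverses are therefore chosen classically. *)
Section ClassicalUnitRing.
Variable R : comNzRingType.

Definition classical_unit_ring : Type := R.
HB.instance Definition _ := GRing.ComNzRing.on classical_unit_ring.

Implicit Types x y : classical_unit_ring.

Definition has_inverse : pred classical_unit_ring :=
  fun x => `[< exists y, y * x = 1 >].

Definition classical_inv x : classical_unit_ring :=
  if pselect (exists y, y * x = 1) is left h then projT1 (cid h) else x.

Lemma classical_mulVr : {in has_inverse, left_inverse 1 classical_inv *%R}.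
Proof.
move=> x /asboolP x_inv; rewrite /classical_inv.
by case: pselect => [h|//]; case: (cid h).
Qed.

Lemma has_inverse_intro x y : y * x = 1 -> has_inverse x.
Proof. by move=> yx1; apply/asboolP; exists y. Qed.

Lemma classical_invr_out : {in [predC has_inverse], classical_inv =1 id}.
Proof. by move=> x /asboolP x_inv; rewrite /classical_inv; case: pselect. Qed.

HB.instance Definition _ := GRing.ComNzRing_hasMulInverse.Build classical_unit_ring
  classical_mulVr has_inverse_intro classical_invr_out.

End ClassicalUnitRing.

Section ResidueField.
Variables (A : comNzRingType) (I : prime_idealr A).

Definition residue_domain : Type := classical_unit_ring {ideal_quot I}.
HB.instance Definition _ := GRing.ComUnitRing.on residue_domain.
HB.instance Definition _ := GRing.ComUnitRing_isIntegral.Build residue_domain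
  (@Quotient.rquot_IdomainAxiom A I).

Definition residue_map : {rmorphism A -> {fraction residue_domain}} :=
  @FracField.tofrac residue_domain \o \pi_{ideal_quot I}.

Lemma residue_map_eq0 a : (residue_map a == 0) = (a \in I).
Proof.
rewrite /= tofrac_eq0 -(rmorph0 \pi_{ideal_quot I}).
by rewrite -Quotient.idealrBE subr0.
Qed.

End ResidueField.

Section PrimeIdealrOf.
Variables (A : comNzRingType) (P : A -> Prop).
Hypothesis P_prime : is_prime_ideal P.

Definition prime_pred : pred A := fun a => `[< P a >].

Lemma prime_pred_idealr_closed : idealr_closed prime_pred.
Proof.
case: P_prime => [[P0 [PD PM]] [P1 _]]; split; rewrite /prime_pred.
- exact/asboolP.
- exact/asboolP.
- by move=> a u v /asboolP Pu /asboolP Pv; apply/asboolP; apply: PD (PM _ _ Pu) Pv.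
Qed.

Lemma prime_pred_prime : prime_idealr_closed prime_pred.
Proof.
case: P_prime => _ [_ PM] u v /asboolP /PM[Pu|Pv]; apply/orP; [left|right]; exact/asboolP.
Qed.

HB.instance Definition _ := isIdealr.Build A prime_pred prime_pred_idealr_closed.
HB.instance Definition _ := isPrimeIdealrClosed.Build A prime_pred prime_pred_prime.

Definition prime_idealr_of : prime_idealr A := PrimeIdealr.clone A prime_pred _.

Lemma residue_field_exists :
  exists (F : fieldType) (g : {rmorphism A -> F}), forall a, g a = 0 <-> P a.
Proof.
exists _, (residue_map prime_idealr_of) => a.
by rewrite (rwP eqP) residue_map_eq0; split=> /asboolP.
Qed.

End PrimeIdealrOf.

Section DiagonalEmbedding.
Variables (A : comNzRingType) (F F' : fieldType).
Variables (g : {rmorphism A -> F}) (g' : {rmorphism A -> F'}).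

Definition diag_ring : comNzRingType := (A * F * F')%type.

Definition diag_embedding (a : A) : diag_ring := (a, g a, g' a).

Lemma diag_embedding_zmod_morphism : zmod_morphism diag_embedding.
Proof. by move=> x y; rewrite /diag_embedding !rmorphB. Qed.

Lemma diag_embedding_monoid_morphism : monoid_morphism diag_embedding.
Proof. by split=> [|x y]; rewrite /diag_embedding ?rmorph1 ?rmorphM. Qed.

HB.instance Definition _ := GRing.isZmodMorphism.Build A diag_ring diag_embedding
  diag_embedding_zmod_morphism.
HB.instance Definition _ := GRing.isMonoidMorphism.Build A diag_ring diag_embedding
  diag_embedding_monoid_morphism.

Lemma diag_embedding_inj : injective diag_embedding.
Proof. by move=> x y []. Qed.

Definition diag_ker (b : diag_ring) : Prop := b.1.2 = 0.
Definition diag_ker' (b : diag_ring) : Prop := b.2 = 0.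

Lemma diag_ker_maximal : is_maximal_ideal diag_ker.
Proof.
by apply: (@kernel_surjective_maximal diag_ring F (snd \o fst)) => u; exists (0, u, 0).
Qed.

Lemma diag_ker'_maximal : is_maximal_ideal diag_ker'.
Proof.
by apply: (@kernel_surjective_maximal diag_ring F' snd) => u; exists (0, 0, u).
Qed.

Lemma diag_ker_neq : ~ (forall b, diag_ker b <-> diag_ker' b).
Proof. by move=> /(_ (0, 0, 1)) [/(_ erefl) /eqP]; rewrite oner_eq0. Qed.

End DiagonalEmbedding.

Lemma contract_maximal_pair (A : comNzRingType) (P P' : A -> Prop) :
  is_prime_ideal P -> is_prime_ideal P' ->
  exists (B : comNzRingType) (f : {rmorphism A -> B}), injective f /\
    exists M M' : B -> Prop,
      [/\ is_maximal_ideal M, is_maximal_ideal M', ~ (forall b, M b <-> M' b),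
          contract f M = P & contract f M' = P'].
Proof.
move=> /residue_field_exists[F [g gP]] /residue_field_exists[F' [g' gP']].
exists _, (diag_embedding g g'); split; first exact: diag_embedding_inj.
exists (@diag_ker A F F'), (@diag_ker' A F F'); split.
- exact: diag_ker_maximal.
- exact: diag_ker'_maximal.
- exact: diag_ker_neq.
- by apply/funext => a; apply/propext; apply: gP.
- by apply/funext => a; apply/propext; apply: gP'.
Qed.

Theorem mainTheorem15 (A : comNzRingType) :
  weak_completely_normal A <->
  (forall P P' : A -> Prop, is_prime_ideal P -> is_prime_ideal P' ->
     non_comparable P P' -> closures_disjoint P P').
Proof.
split=> [A_wcn P P' P_prime P'_prime | primes_disjoint B f _ M M' M_max M'_max _].
- have [B [f [f_inj [M [M' [M_max M'_max M_neq <- <-]]]]]] :=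
    contract_maximal_pair P_prime P'_prime.
  exact: A_wcn.
- by apply: primes_disjoint; apply/contract_prime/maximal_ideal_prime.
Qed.
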